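(* Let $A$ be a set of regular cardinals with no maximum such that $\sup(A)$ is a strong limit cardinal (regular or singular). Then $\operatorname{spec}(A)\setminus\sup(A)\subseteq\operatorname{spec}^*(A)$.
   Context: $\prod A$ is the set of functions $f$ on $A$ with $f(a)\in a$, ordered pointwise. $\operatorname{spec}(A)$ is the set of regular $\lambda$ for which some $\mathcal{F}\subseteq\prod A$ of size $\lambda$ has every $\lambda$-sized subset unbounded in $(\prod A,<)$. For $\mathcal{G}\subseteq\prod A$, $\operatorname{ub}(\mathcal{G})$ is the set of $a\in A$ such that $\{f(a):f\in\mathcal{G}\}$ is unbounded in $a$. $\operatorname{spec}^*(A)$ (the strong part of the Tukey spectrum) is the set of regular $\lambda$ such that there is $\mathcal{F}\subseteq\prod A$ of size $\lambda$ such that for every $\mathcal{F}_0\subseteq\mathcal{F}$ of size $\lambda$, $\operatorname{ub}(\mathcal{F}_0)$ is unbounded in $\sup(A)$. $\operatorname{spec}(A)\setminus\sup(A)$ denotes the members of $\operatorname{spec}(A)$ that are $\geq\sup(A)$. *)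

From mathcomp Require Import all_boot.
From mathcomp Require Import boolp classical_sets functions cardinality.
Unset Printing Implicit Defensive.
Local Open Scope classical_set_scope.
Local Open Scope card_scope.

(* Ordinals are modelled as elements of a (strictly) well-ordered type;
   the ordinal represented by [a] is its initial segment [seg lt a]. *)
Definition well_order {T : Type} (lt : T -> T -> Prop) : Prop :=
  (forall x, ~ lt x x) /\
  (forall x y z, lt x y -> lt y z -> lt x z) /\
  (forall x y, lt x y \/ x = y \/ lt y x) /\
  well_founded lt.

Definition leo {T : Type} (lt : T -> T -> Prop) (x y : T) : Prop := lt x y \/ x = y.

Definition seg {T : Type} (lt : T -> T -> Prop) (a : T) : set T := [set x | lt x a].

Definition card_lt {T U : Type} (X : set T) (Y : set U) : Prop :=
  X #<= Y /\ ~ (Y #<= X).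

(* [D] (a downward-closed part of a well order, i.e. an ordinal) is a regular
   cardinal: infinite, initial (every proper initial segment is of strictly
   smaller cardinality), and every cofinal subset has full cardinality
   (cf = identity). *)
Definition regular_ord {T : Type} (lt : T -> T -> Prop) (D : set T) : Prop :=
  infinite_set D /\
  (forall x, D x -> card_lt (seg lt x) D) /\
  (forall X : set T, X `<=` D ->
     (forall y, D y -> exists x, X x /\ leo lt y x) -> X #= D).

(* sup(A), as the set of ordinals below it *)
Definition supA {T : Type} (lt : T -> T -> Prop) (A : set T) : set T :=
  \bigcup_(a in A) seg lt a.

Definition strong_limit {T : Type} (S : set T) : Prop :=
  forall Y : set T, Y `<=` S -> card_lt Y S ->
    card_lt [set Z : set T | Z `<=` Y] S.

Definition ProdA {T : Type} (lt : T -> T -> Prop) (A : set T) :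
  set ({a : T | A a} -> T) := [set f | forall a, lt (f a) (proj1_sig a)].

Definition lt_prod {T : Type} (lt : T -> T -> Prop) (A : set T)
  (f g : {a : T | A a} -> T) : Prop := forall a, lt (f a) (g a).

Definition unbounded_prod {T : Type} (lt : T -> T -> Prop) (A : set T)
  (G : set ({a : T | A a} -> T)) : Prop :=
  ~ exists g, ProdA lt A g /\ forall f, G f -> @lt_prod T lt A f g.

Definition ub {T : Type} (lt : T -> T -> Prop) (A : set T)
  (G : set ({a : T | A a} -> T)) : set T :=
  [set a | exists h : A a, forall x, lt x a ->
             exists f, G f /\ leo lt x (f (exist _ a h))].

(* lambda (given as a well-ordered type L) is in spec(A) *)
Definition in_spec {T L : Type} (lt : T -> T -> Prop) (A : set T)
  (ltL : L -> L -> Prop) : Prop :=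
  regular_ord ltL [set: L] /\
  exists F, F `<=` ProdA lt A /\ F #= [set: L] /\
    forall F0, F0 `<=` F -> F0 #= [set: L] -> @unbounded_prod T lt A F0.

Definition in_spec_star {T L : Type} (lt : T -> T -> Prop) (A : set T)
  (ltL : L -> L -> Prop) : Prop :=
  regular_ord ltL [set: L] /\
  exists F, F `<=` ProdA lt A /\ F #= [set: L] /\
    forall F0, F0 `<=` F -> F0 #= [set: L] ->
      forall x, supA lt A x -> exists a, @ub T lt A F0 a /\ leo lt x a.

From mathcomp Require Import all_boot.
From mathcomp Require Import boolp classical_sets functions cardinality.
Local Open Scope classical_set_scope.
Local Open Scope card_scope.

(* Let F witness that the regular lambda >= sup A is in spec(A), let F0 be a
   subfamily of F of size lambda and x < sup A, and pick a in A above x.  As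
   sup A is a strong limit, 2^(2^|a|) < sup A <= lambda, so colouring each f in
   F0 by its restriction to A below x uses fewer than lambda colours, and the
   regularity of lambda gives a subfamily F1 of size lambda whose members all
   agree below x.  If ub(F0) had no point above x, then F1 would be bounded at
   every coordinate d >= x (as d is not in ub(F0)), and also at every d < x
   (the common value lies below the limit ordinal d), so F1 would be bounded,
   contradicting the choice of F. *)

Lemma card_le_fun {T U} {X : set T} {Y : set U} (u0 : U) :
  X #<= Y -> exists f : T -> U, (forall x, X x -> Y (f x)) /\
    (forall x1 x2, X x1 -> X x2 -> f x1 = f x2 -> x1 = x2).
Proof.
move=> /card_leP[g].
pose f x := if pselect (X x) is left Xx then val (g (SigSub (mem_set Xx))) else u0.
exists f; split=> [x Xx|x1 x2 X1 X2].
  by rewrite /f; case: pselect => // ?; exact: set_mem (valP (g _)).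
rewrite /f; case: pselect => // X1'; case: pselect => // X2' /val_inj.
by move=> /(@inj _ _ _ g); case/(_ (in_setT _) (in_setT _)).
Qed.

Section WellOrder.
Context {T : Type} {lt : T -> T -> Prop} (WO : well_order lt).

Let ltxx x : ~ lt x x := WO.1 x.
Let lt_trans x y z : lt x y -> lt y z -> lt x z := WO.2.1 x y z.

Lemma not_leo_lt x y : ~ leo lt x y -> lt y x.
Proof.
move=> nxy; have [//|[yx|xy]] := WO.2.2.1 y x; exfalso; apply: nxy.
  by right.
by left.
Qed.

Lemma regular_cofinal_or_bounded (X : set T) : regular_ord lt [set: T] ->
  X #= [set: T] \/ exists y, forall x, X x -> lt x y.
Proof.
move=> [_ [_ cof]].
have [Xcof|/existsNP[y Xy]] := pselect (forall y, exists x, X x /\ leo lt y x).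
  by left; apply: cof.
right; exists y => x Xx.
by apply: not_leo_lt => yx; apply: Xy; exists x.
Qed.

Lemma regular_pigeonhole {I : Type} (col : T -> I) (S : set I) :
  regular_ord lt [set: T] -> (forall t, S (col t)) -> ~ ([set: T] #<= S) ->
  exists i, [set t | col t = i] #= [set: T].
Proof.
move=> reg colS TnS; apply: contrapT => /forallNP small.
have /choice[b colb] : forall i, exists y, forall t, col t = i -> lt t y.
  move=> i; have [/small//|//] := regular_cofinal_or_bounded [set t | col t = i] reg.
have [full|[y yb]] := regular_cofinal_or_bounded (b @` range col) reg.
  apply: TnS; have [_ Tb] := (card_eqPle _ _).1 full.
  apply: card_le_trans Tb (card_le_trans (card_image_le _ _) _).
  by apply: subset_card_le => _ [t _ <-]; exact: colS.
apply: (ltxx y); apply: lt_trans (colb _ y erefl) (yb _ _).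
exact/imageP/imageP.
Qed.

Lemma regular_seg_limit {a w : T} : regular_ord lt (seg lt a) -> lt w a ->
  exists2 z, lt w z & lt z a.
Proof.
move=> [inf [_ cof]] wa; apply: contrapT => nowz.
have wcof : [set w] #= seg lt a.
  apply: cof => [_ -> //|y ya]; exists w; split=> //.
  by apply: contrapT => /not_leo_lt wy; apply: nowz; exists y.
by apply: inf; rewrite -(eq_finite_set wcof); exact: finite_set1.
Qed.

Lemma pair_set_inj {a b a' b' : T} : lt b a -> lt b' a' ->
  [set a; b] = [set a'; b'] -> a = a' /\ b = b'.
Proof.
move=> ba ba' E.
have aa' : a = a'.
  have : [set a'; b'] a by rewrite -E; left.
  have : [set a; b] a' by rewrite E; left.
  case=> [->//|E1]; case=> [->//|E2]; exfalso; apply: (ltxx a).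
  by apply: (lt_trans a a' a); [rewrite {1}E2 | rewrite E1].
subst a'; split=> //.
have : [set a; b'] b by rewrite -E; right.
by case=> // E1; exfalso; apply: (ltxx a); rewrite -{1}E1.
Qed.

End WellOrder.

Section Spectrum.
Context {T : Type} {lt : T -> T -> Prop} {A : set T}.
Hypothesis WO : well_order lt.
Hypothesis regA : forall a, A a -> regular_ord lt (seg lt a).
Hypothesis nomaxA : forall a, A a -> exists b, A b /\ lt a b.
Hypothesis strongA : strong_limit (supA lt A).

Local Notation prodA := (ProdA lt A).
Local Notation supA := (supA lt A).

Lemma subset_ub {G H : set ({a | A a} -> T)} :
  G `<=` H -> ub lt A G `<=` ub lt A H.
Proof.
move=> GH a [h ubG]; exists h => y ya.
by have [f [Gf yf]] := ubG y ya; exists f; split=> //; apply: GH.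
Qed.

Lemma not_ub_bounded (G : set ({a | A a} -> T)) (d : {a | A a}) :
  ~ ub lt A G (proj1_sig d) ->
  exists z, lt z (proj1_sig d) /\ forall f, G f -> lt (f d) z.
Proof.
case: d => a h /= nub; apply: contrapT => nbnd; apply: nub; exists h => y ya.
apply: contrapT => nGy; apply: nbnd; exists y; split=> // f Gf.
by apply: (not_leo_lt WO) => yf; apply: nGy; exists f.
Qed.

Lemma pointwise_bounded_prod (G : set ({a | A a} -> T)) :
  (forall d, exists z, lt z (proj1_sig d) /\ forall f, G f -> lt (f d) z) ->
  exists g, prodA g /\ forall f, G f -> lt_prod lt A f g.
Proof.
move=> /choice[g gP]; exists g; split=> [d|f Gf d]; first exact: (gP d).1.
exact: (gP d).2.
Qed.

Lemma seg_card_lt_supA a : A a -> card_lt (seg lt a) supA.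
Proof.
move=> Aa; split; first by apply: subset_card_le => y ya; exists a.
have [b [Ab ab]] := nomaxA _ Aa; have [_ nba] := (regA _ Ab).2.1 a ab.
move=> Sa; apply: nba; apply: card_le_trans Sa.
by apply: subset_card_le => y yb; exists b.
Qed.

(* A function below [x] is coded by the set of codes of the pairs [{d, f d}]:
   as [f d < d], such a pair determines both [d] and [f d]. *)
Lemma restriction_coloring x : supA x ->
  exists (Y : set T) (c : ({a | A a} -> T) -> set T),
  [/\ ~ (supA #<= [set C | C `<=` Y]),
      forall f, prodA f -> c f `<=` Y &
      forall f g, prodA f -> prodA g -> c f = c g ->
        forall d, lt (proj1_sig d) x -> f d = g d].
Proof.
case=> a Aa xa.
have [PS nSP] := strongA _ (fun y ya => ex_intro2 _ _ a Aa ya) (seg_card_lt_supA _ Aa).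
have [e [eS einj]] := card_le_fun x PS.
pose Y := e @` [set Z | Z `<=` seg lt a].
have YS : Y `<=` supA by move=> _ [Z Za <-]; exact: eS.
have [_ nSY] := strongA _ YS (conj (subset_card_le YS) (fun SY =>
  nSP (card_le_trans SY (card_image_le _ _)))).
have lt_trans := WO.2.1.
have pair_seg f d :
    prodA f -> lt (proj1_sig d) x -> [set proj1_sig d; f d] `<=` seg lt a.
  move=> Pf dx _ [->|->]; first exact: lt_trans _ _ _ dx xa.
  exact: lt_trans _ _ _ (Pf d) (lt_trans _ _ _ dx xa).
pose code (f : {a | A a} -> T) d := e [set proj1_sig d; f d].
exists Y, (fun f => code f @` [set d | lt (proj1_sig d) x]); split=> //.
  by move=> f Pf _ [d dx <-]; exists [set proj1_sig d; f d] => //; apply: pair_seg.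
move=> f g Pf Pg cfg d dx.
have : (code g @` [set d | lt (proj1_sig d) x]) (code f d) by rewrite -cfg; exists d.
case=> d' d'x /einj E.
have [/(eq_sig_hprop (fun _ => @Prop_irrelevance _)) dd gf] :=
  pair_set_inj WO (Pg d') (Pf d) (E (pair_seg _ _ Pg d'x) (pair_seg _ _ Pf dx)).
by rewrite -gf dd.
Qed.

Lemma agreeing_subfamily {L : Type} {ltL : L -> L -> Prop} {F0} {x : T} :
  well_order ltL -> regular_ord ltL [set: L] -> supA #<= [set: L] ->
  F0 `<=` prodA -> F0 #= [set: L] -> supA x ->
  exists F1, [/\ F1 `<=` F0, F1 #= [set: L] &
    forall f g d, F1 f -> F1 g -> lt (proj1_sig d) x -> f d = g d].
Proof.
move=> WOL regL SL F0P F0L Sx.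
have [Y [c [nSY cY cagree]]] := restriction_coloring _ Sx.
have [phi [phiF0 phiI]] := card_le_fun (fun _ => x) (proj2 ((card_eqPle _ _).1 F0L)).
have [i Li] := regular_pigeonhole WOL (fun l => c (phi l)) [set C | C `<=` Y] regL
  (fun l => cY _ (F0P _ (phiF0 l I))) (fun LY => nSY (card_le_trans SL LY)).
exists (phi @` [set l | c (phi l) = i]); split.
- by move=> _ [l _ <-]; apply: phiF0.
- by apply: card_eq_trans Li; apply: inj_card_eq => l1 l2 _ _; apply: phiI.
- move=> _ _ d [l cl <-] [l' cl' <-] dx.
  by apply: cagree dx; [apply: F0P; apply: phiF0..|rewrite cl cl'].
Qed.

End Spectrum.

Theorem lemma5p3 (T : Type) (lt : T -> T -> Prop) (A : set T) :
  well_order lt ->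
  (forall a, A a -> regular_ord lt (seg lt a)) ->
  (forall a, A a -> exists b, A b /\ lt a b) ->
  strong_limit (supA lt A) ->
  forall (L : Type) (ltL : L -> L -> Prop), well_order ltL ->
    in_spec lt A ltL ->
    supA lt A #<= [set: L] ->
    in_spec_star lt A ltL.
Proof.
move=> WO regA nomaxA strongA L ltL WOL [regL [F [FP [FL Funb]]]] SL.
split=> //; exists F; do 2!split=> //; move=> F0 F0F F0L x Sx.
apply: contrapT => /forallNP noub.
have [F1 [F1F0 F1L agree]] :=
  agreeing_subfamily WO regA nomaxA strongA WOL regL SL (subset_trans F0F FP) F0L Sx.
have [f0 F1f0] : F1 !=set0.
  by apply: infinite_setN0; rewrite (eq_finite_set F1L); exact: regL.1.
apply: (Funb F1 (subset_trans F1F0 F0F) F1L); apply: pointwise_bounded_prod => d.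
have [dx|ndx] := pselect (lt (proj1_sig d) x).
  have f0d := FP _ (F0F _ (F1F0 _ F1f0)) d.
  have [z f0z zd] := regular_seg_limit WO (regA _ (proj2_sig d)) f0d.
  by exists z; split=> // f F1f; rewrite (agree f f0 d).
apply: (not_ub_bounded WO) => /(subset_ub F1F0) ubd; apply: ndx.
by apply: (not_leo_lt WO) => xd; exact: (noub _ (conj ubd xd)).
Qed.
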